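(* Let $A$ and $B$ be differential rings and $\nu\colon A\to B$ a differential homomorphism. Suppose $B$ is differentially generated over $\nu(A)$ by a single element $\eta\in B$, and that there exist $b_1,\ldots,b_n\in A$ such that $\nu(b_k)\eta\in\nu(A)$ for all $k$ and $\{b_1,\ldots,b_n\}=A$. Then the contraction map $\nu^*\colon \operatorname{Spec}^\Delta B\to V(\ker\nu)$, $\mathfrak q\mapsto\nu^{-1}(\mathfrak q)$, is a homeomorphism, where $V(\ker\nu)\subseteq\operatorname{Spec}^\Delta A$ carries the subspace topology.
   Context: All rings are commutative with unit; homomorphisms preserve the unit. A differential ring is a ring equipped with finitely many pairwise commuting derivations; a differential homomorphism is a ring homomorphism commuting with the derivations. $B$ is differentially generated over $\nu(A)$ by $\eta$ if $B$ is the smallest differential subring of $B$ containing $\nu(A)$ and $\eta$ (i.e. $B$ is generated as a ring over $\nu(A)$ by all derivatives of $\eta$ of all orders). For a differential ring $A$, $\operatorname{Spec}^\Delta A$ is the set of prime ideals of $A$ closed under all the derivations (prime differential ideals); for $E\subseteq A$, $V(E)$ is the set of prime differential ideals containing $E$, and the sets $V(E)$ are the closed sets of the Kolchin topology on $\operatorname{Spec}^\Delta A$. For $E\subseteq A$, $\{E\}$ denotes the smallest radical differential ideal of $A$ containing $E$. *)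

From HB Require Import structures.
From mathcomp Require Import all_boot all_order all_algebra.
Set Implicit Arguments. Unset Strict Implicit. Unset Printing Implicit Defensive.
Import GRing.Theory.
Local Open Scope ring_scope.

Definition is_derivation (R : comPzRingType) (d : R -> R) : Prop :=
  (forall x y, d (x + y) = d x + d y) /\ (forall x y, d (x * y) = d x * y + x * d y).

Definition is_diff_ring (R : comPzRingType) (m : nat) (d : 'I_m -> R -> R) : Prop :=
  (forall i, is_derivation (d i)) /\ (forall i j x, d i (d j x) = d j (d i x)).

Definition is_diff_hom (A B : comPzRingType) (m : nat) (dA : 'I_m -> A -> A)
  (dB : 'I_m -> B -> B) (nu : {rmorphism A -> B}) : Prop :=
  forall i a, nu (dA i a) = dB i (nu a).

Definition subring_pred (R : comPzRingType) (S : R -> Prop) : Prop :=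
  S 1 /\ (forall x y, S x -> S y -> S (x - y)) /\ (forall x y, S x -> S y -> S (x * y)).

Definition diff_closed (R : comPzRingType) (m : nat) (d : 'I_m -> R -> R) (S : R -> Prop) :=
  forall i x, S x -> S (d i x).

Definition diff_generated (A B : comPzRingType) (m : nat) (dB : 'I_m -> B -> B)
  (nu : {rmorphism A -> B}) (eta : B) : Prop :=
  forall S : B -> Prop, subring_pred S -> diff_closed dB S ->
    (forall a, S (nu a)) -> S eta -> forall y, S y.

Definition is_ideal (R : comPzRingType) (I : R -> Prop) : Prop :=
  I 0 /\ (forall x y, I x -> I y -> I (x + y)) /\ (forall r x, I x -> I (r * x)).

Definition is_prime_ideal (R : comPzRingType) (P : R -> Prop) : Prop :=
  is_ideal P /\ ~ P 1 /\ (forall x y, P (x * y) -> P x \/ P y).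

Definition is_prime_diff_ideal (R : comPzRingType) (m : nat) (d : 'I_m -> R -> R)
  (P : R -> Prop) : Prop := is_prime_ideal P /\ diff_closed d P.

Definition is_radical_diff_ideal (R : comPzRingType) (m : nat) (d : 'I_m -> R -> R)
  (I : R -> Prop) : Prop :=
  is_ideal I /\ diff_closed d I /\ (forall x n, I (x ^+ n) -> I x).

(* {E} : smallest radical differential ideal containing E *)
Definition rad_diff_gen (R : comPzRingType) (m : nat) (d : 'I_m -> R -> R)
  (E : R -> Prop) : R -> Prop :=
  fun x => forall I, is_radical_diff_ideal d I -> (forall e, E e -> I e) -> I x.

Definition SpecD (R : comPzRingType) (m : nat) (d : 'I_m -> R -> R) : Type :=
  {P : R -> Prop | is_prime_diff_ideal d P}.

Definition Vset (R : comPzRingType) (E : R -> Prop) (P : R -> Prop) : Prop :=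
  forall e, E e -> P e.

Definition kolchin_closed (R : comPzRingType) (m : nat) (d : 'I_m -> R -> R)
  (C : SpecD d -> Prop) : Prop :=
  exists E : R -> Prop, forall p : SpecD d, C p <-> Vset E (proj1_sig p).

Definition ker_pred (A B : comPzRingType) (nu : {rmorphism A -> B}) : A -> Prop :=
  fun a => nu a = 0.

Definition Vker (A B : comPzRingType) (m : nat) (dA : 'I_m -> A -> A)
  (nu : {rmorphism A -> B}) : Type :=
  {p : SpecD dA | Vset (ker_pred nu) (proj1_sig p)}.

Definition Vker_closed (A B : comPzRingType) (m : nat) (dA : 'I_m -> A -> A)
  (nu : {rmorphism A -> B}) (C : Vker dA nu -> Prop) : Prop :=
  exists C' : SpecD dA -> Prop, kolchin_closed C' /\
    forall x : Vker dA nu, C x <-> C' (proj1_sig x).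

(* homeomorphism between spaces given by their families of closed sets:
   bijective, continuous, and closed (= inverse continuous) *)
Definition homeomorphism (X Y : Type) (clX : (X -> Prop) -> Prop)
  (clY : (Y -> Prop) -> Prop) (f : X -> Y) : Prop :=
  bijective f /\
  (forall C, clY C -> clX (fun x => C (f x))) /\
  (forall C, clX C -> clY (fun y => exists x, C x /\ f x = y)).

Definition contr (A B : comPzRingType) (nu : {rmorphism A -> B}) (q : B -> Prop) : A -> Prop :=
  fun a => q (nu a).

(* The proof is a localization argument.
   - Since the elements y of B having some nu(b_k)^N y in nu(A) form a differential
     subring containing nu(A) and eta, every y in B is a "fraction" a / b_k^N.
   - Every prime differential ideal p of A misses some b_k (they generate A as a
     radical differential ideal), so every y in B is a fraction a / s with s not in p.
   - For p in V(ker nu) the set  p^e = { y | nu s * y = nu a, s not in p, a in p }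
     is then a prime differential ideal of B, and p |-> p^e is inverse to the
     contraction q |-> nu^{-1}(q).
   - Both maps are continuous: the contraction pulls V(E) back to V(nu(E)), and the
     extension pulls V(E) back to V(numerators of E). *)
From Stdlib Require Import Classical FunctionalExtensionality PropExtensionality ProofIrrelevance.
From HB Require Import structures.
From mathcomp Require Import all_boot all_order all_algebra.
Set Implicit Arguments. Unset Strict Implicit.
Import GRing.Theory.
Local Open Scope ring_scope.

Lemma sig_eqP (T : Type) (P : T -> Prop) (x y : sig P) :
  proj1_sig x = proj1_sig y -> x = y.
Proof. by case: x => x hx; case: y => y hy /= e; subst y; f_equal; apply: proof_irrelevance. Qed.

Lemma pred_ext (T : Type) (P Q : T -> Prop) : (forall x, P x <-> Q x) -> P = Q.
Proof.
by move=> h; apply: functional_extensionality => x; apply: propositional_extensionality.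
Qed.

(* A continuous bijection whose inverse is continuous is a homeomorphism: the image
   of a set under f is its preimage under the inverse g. *)
Lemma homeomorphism_inverse (X Y : Type) (clX : (X -> Prop) -> Prop)
    (clY : (Y -> Prop) -> Prop) (f : X -> Y) (g : Y -> X) :
  cancel f g -> cancel g f ->
  (forall C, clY C -> clX (fun x => C (f x))) ->
  (forall C, clX C -> clY (fun y => C (g y))) ->
  homeomorphism clX clY f.
Proof.
move=> fK gK fcont gcont; split; first by exists g.
split=> // C /gcont; congr clY; apply: pred_ext => y; split.
- by move=> hC; exists (g y); rewrite gK.
- by move=> [x [hC <-]]; rewrite fK.
Qed.

Section IdealFacts.
Variable R : comPzRingType.

Lemma idealB (P : R -> Prop) : is_ideal P -> forall x y, P x -> P y -> P (x - y).
Proof. by move=> [_ [hD hM]] x y hx hy; apply: hD => //; rewrite -mulN1r; apply: hM. Qed.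

Lemma idealBK (P : R -> Prop) : is_ideal P -> forall x y, P (x - y) -> P y -> P x.
Proof. by move=> [_ [hD _]] x y hxy hy; rewrite -(subrK y x); apply: hD. Qed.

Lemma primeM (P : R -> Prop) : is_prime_ideal P -> forall s t, ~ P s -> ~ P t -> ~ P (s * t).
Proof. by move=> [_ [_ hpr]] s t hs ht /hpr []. Qed.

Lemma primeX (P : R -> Prop) : is_prime_ideal P -> forall s N, ~ P s -> ~ P (s ^+ N).
Proof.
move=> hP s N hs; elim: N => [|N IH]; first by rewrite expr0; case: hP => _ [].
by rewrite exprS; apply: primeM.
Qed.

Lemma prime_rad m (d : 'I_m -> R -> R) (P : R -> Prop) :
  is_prime_diff_ideal d P -> is_radical_diff_ideal d P.
Proof.
move=> [[hI [h1 hpr]] hd]; do 2!split=> //; move=> x; elim=> [|N IH].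
  by rewrite expr0.
by rewrite exprS => /hpr [].
Qed.

Lemma prime_avoids m (d : 'I_m -> R -> R) (E P : R -> Prop) :
  rad_diff_gen d E 1 -> is_prime_diff_ideal d P -> exists2 e, E e & ~ P e.
Proof.
move=> hE hP; apply: NNPP => hnot; case: (hP) => [[_ [h1 _]] _]; apply: h1.
apply: (hE P (prime_rad hP)) => e he; apply: NNPP => hPe; apply: hnot; by exists e.
Qed.

End IdealFacts.

(* Calculus of fractions: "nu s * y = nu a" says that y is the fraction a / s.
   Sums, differences, products and derivatives of fractions are fractions. *)
Section Fractions.
Variables (A B : comPzRingType) (nu : {rmorphism A -> B}).

Lemma frac_add s1 s2 a1 a2 x y :
  nu s1 * x = nu a1 -> nu s2 * y = nu a2 -> nu (s1 * s2) * (x + y) = nu (s2 * a1 + s1 * a2).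
Proof.
move=> h1 h2; rewrite rmorphD !rmorphM -h1 -h2 mulrDr.
by rewrite !mulrA (mulrC (nu s2) (nu s1)).
Qed.

Lemma frac_sub s1 s2 a1 a2 x y :
  nu s1 * x = nu a1 -> nu s2 * y = nu a2 -> nu (s1 * s2) * (x - y) = nu (s2 * a1 - s1 * a2).
Proof.
move=> h1 h2; rewrite rmorphB !rmorphM -h1 -h2 mulrBr.
by rewrite !mulrA (mulrC (nu s2) (nu s1)).
Qed.

Lemma frac_mul s1 s2 a1 a2 x y :
  nu s1 * x = nu a1 -> nu s2 * y = nu a2 -> nu (s1 * s2) * (x * y) = nu (a1 * a2).
Proof.
move=> h1 h2; rewrite !rmorphM -h1 -h2.
by rewrite !mulrA -(mulrA (nu s1)) (mulrC (nu s2) x) !mulrA.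
Qed.

(* Quotient rule: d(a / s) = (s da - ds a) / s^2. *)
Lemma frac_der m (dA : 'I_m -> A -> A) (dB : 'I_m -> B -> B) :
  is_diff_ring dB -> is_diff_hom dA dB nu ->
  forall i s a y, nu s * y = nu a -> nu (s * s) * dB i y = nu (s * dA i a - dA i s * a).
Proof.
move=> hB hnu i s a y h.
have hLeibniz : nu (dA i s) * y + nu s * dB i y = nu (dA i a).
  by rewrite !hnu -h (proj2 (proj1 hB i)).
rewrite rmorphB !rmorphM -hLeibniz -h mulrDr !mulrA (mulrC (nu s) (nu (dA i s))).
by rewrite addrAC subrr add0r.
Qed.

End Fractions.

Lemma contr_prime_diff (A B : comPzRingType) m (dA : 'I_m -> A -> A)
    (dB : 'I_m -> B -> B) (nu : {rmorphism A -> B}) (q : B -> Prop) :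
  is_diff_hom dA dB nu -> is_prime_diff_ideal dB q ->
  is_prime_diff_ideal dA (contr nu q) /\ Vset (ker_pred nu) (contr nu q).
Proof.
move=> hnu [[[h0 [hD hM]] [h1 hpr]] hd]; rewrite /contr; split; last first.
  by move=> e; rewrite /ker_pred => ->.
split; last by move=> i x hx; rewrite hnu; apply: hd.
split; first split; [|split|split].
- by rewrite rmorph0.
- by move=> x y hx hy; rewrite rmorphD; apply: hD.
- by move=> r x hx; rewrite rmorphM; apply: hM.
- by rewrite rmorph1.
- by move=> x y; rewrite rmorphM; apply: hpr.
Qed.

Lemma Vset_contr (A B : comPzRingType) (nu : {rmorphism A -> B}) (E : A -> Prop)
    (q : B -> Prop) :
  Vset E (contr nu q) <-> Vset (fun y => exists2 e, E e & y = nu e) q.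
Proof. by split=> [hV y [e he ->] | hV e he]; [apply: hV | apply: hV; exists e]. Qed.

Definition extension (A B : comPzRingType) (nu : {rmorphism A -> B}) (p : A -> Prop)
    (y : B) : Prop :=
  exists s a, ~ p s /\ p a /\ nu s * y = nu a.

Definition numerators (A B : comPzRingType) (nu : {rmorphism A -> B}) (E : B -> Prop)
    (a : A) : Prop :=
  exists e s, E e /\ nu s * e = nu a.

Section Extension.
Variables (A B : comPzRingType) (m : nat) (dA : 'I_m -> A -> A) (dB : 'I_m -> B -> B).
Hypothesis hB : is_diff_ring dB.
Variable nu : {rmorphism A -> B}.
Hypothesis hnu : is_diff_hom dA dB nu.
Variable p : A -> Prop.
Hypothesis hp : is_prime_diff_ideal dA p.
Hypothesis hker : Vset (ker_pred nu) p.

Let p_ideal : is_ideal p := proj1 (proj1 hp).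
Let p_prime : is_prime_ideal p := proj1 hp.
Let p_not1 : ~ p 1 := proj1 (proj2 p_prime).
Let p_mul : forall r x, p x -> p (r * x) := proj2 (proj2 p_ideal).
Let p_split : forall x y, p (x * y) -> p x \/ p y := proj2 (proj2 p_prime).

(* If x = a / s with s outside p and a in p, then x lies in p (as ker nu <= p). *)
Lemma frac_mem s a x : ~ p s -> nu s * nu x = nu a -> p a -> p x.
Proof.
move=> hs e ha; have : nu (s * x - a) = 0 by rewrite rmorphB rmorphM e subrr.
by move/hker/(idealBK p_ideal)/(_ ha)/p_split => [].
Qed.

Lemma contr_extension x : contr nu (extension nu p) x <-> p x.
Proof.
split=> [[s [a [hs [ha e]]]] | hx]; first exact: frac_mem hs e ha.
by exists 1, x; rewrite rmorph1 mul1r.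
Qed.

Lemma extension_diff_closed : diff_closed dB (extension nu p).
Proof.
move=> i y [s [a [hs [ha e]]]]; exists (s * s), (s * dA i a - dA i s * a).
split; first exact: primeM.
split; last exact: frac_der.
by apply: (idealB p_ideal); apply: p_mul => //; apply: (proj2 hp).
Qed.

Hypothesis hcover : forall y, exists s a, ~ p s /\ nu s * y = nu a.

Lemma extension_ideal : is_ideal (extension nu p).
Proof.
have [h0 [hD hM]] := p_ideal.
split; first by exists 1, 0; rewrite mulr0 rmorph0.
split=> [x y [s1 [a1 [hs1 [ha1 e1]]]] [s2 [a2 [hs2 [ha2 e2]]]] |
         r x [s [a [hs [ha e]]]]].
- exists (s1 * s2), (s2 * a1 + s1 * a2); split; first exact: primeM.
  by split; [apply: hD; apply: hM | exact: frac_add].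
- have [t [c [ht hc]]] := hcover r; exists (t * s), (c * a).
  by split; [exact: primeM | split; [apply: hM | exact: frac_mul]].
Qed.

Lemma extension_prime_diff : is_prime_diff_ideal dB (extension nu p).
Proof.
split; last exact: extension_diff_closed.
split; first exact: extension_ideal.
split=> [hone | x y [s [a [hs [ha e]]]]].
  by apply: p_not1; apply/contr_extension; rewrite /contr rmorph1.
have [t1 [c1 [ht1 hc1]]] := hcover x; have [t2 [c2 [ht2 hc2]]] := hcover y.
have e12 : nu (t1 * t2) * nu s * (x * y) = nu (s * (c1 * c2)).
  by rewrite mulrAC (frac_mul hc1 hc2) mulrC -rmorphM.
have : p (s * (c1 * c2)).
  apply: (frac_mem (s := 1) (a := t1 * t2 * a) p_not1 _ (p_mul _ ha)).
  by rewrite rmorph1 mul1r -e12 -mulrA e -rmorphM.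
case/p_split => // /p_split [hc | hc].
- by left; exists t1, c1.
- by right; exists t2, c2.
Qed.

Lemma Vset_extension (E : B -> Prop) :
  Vset E (extension nu p) <-> Vset (numerators nu E) p.
Proof.
split=> [hV a [e [s [he hs]]] | hV e he].
  apply/contr_extension; rewrite /contr -hs.
  exact: (proj2 (proj2 extension_ideal)) (hV e he).
have [s [a [hs e']]] := hcover e; exists s, a; do 2!split=> //.
by apply: hV; exists e, s.
Qed.

End Extension.

Lemma extension_contr (A B : comPzRingType) m (dB : 'I_m -> B -> B)
    (nu : {rmorphism A -> B}) (q : B -> Prop) :
  is_prime_diff_ideal dB q ->
  (forall y, exists s a, ~ contr nu q s /\ nu s * y = nu a) ->
  forall y, extension nu (contr nu q) y <-> q y.
Proof.
move=> [[[_ [_ hM]] [_ hpr]] _] hcover y; split.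
  by move=> [s [a [hs [ha e]]]]; rewrite /contr -e in ha; case/hpr: ha.
move=> hy; have [s [a [hs e]]] := hcover y; exists s, a; do 2!split=> //.
by rewrite /contr -e; apply: hM.
Qed.

Section Homeomorphism.
Variables (m : nat) (A B : comPzRingType) (dA : 'I_m -> A -> A) (dB : 'I_m -> B -> B).
Hypothesis hB : is_diff_ring dB.
Variable nu : {rmorphism A -> B}.
Hypothesis hnu : is_diff_hom dA dB nu.
Variable eta : B.
Hypothesis hgen : diff_generated dB nu eta.
Variables (n : nat) (b : 'I_n -> A).
Hypothesis hb : forall k, exists a, nu (b k) * eta = nu a.
Hypothesis hbA : forall x : A, rad_diff_gen dA (fun a => exists k, a = b k) x.

(* If s clears the denominator of eta, a power of s clears the denominator of any y:
   such y form a differential subring of B containing nu(A) and eta. *)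
Lemma power_denominator s : (exists a, nu s * eta = nu a) ->
  forall y, exists N a, nu (s ^+ N) * y = nu a.
Proof.
move=> hs; apply: (@hgen (fun y => exists N a, nu (s ^+ N) * y = nu a)).
- split; first by exists 0%N, 1; rewrite expr0 rmorph1 mulr1.
  split=> x z [N [a ha]] [M [c hc]]; exists (N + M)%N; rewrite exprD; eexists.
    exact: frac_sub ha hc.
  exact: frac_mul ha hc.
- move=> i x [N [a ha]]; exists (N + N)%N, (s ^+ N * dA i a - dA i (s ^+ N) * a).
  by rewrite exprD; exact: (frac_der hB hnu i ha).
- by move=> a; exists 0%N, a; rewrite expr0 rmorph1 mul1r.
- by case: hs => a ha; exists 1%N, a; rewrite expr1.
Qed.

(* Relative to any prime differential ideal p of A, every element of B is a
   fraction whose denominator is a power of some b_k outside p. *)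
Lemma prime_cover p : is_prime_diff_ideal dA p ->
  forall y, exists s a, ~ p s /\ nu s * y = nu a.
Proof.
move=> hp y; have [_ [k ->] hk] := prime_avoids (hbA 1) hp.
have [N [a ha]] := power_denominator (hb k) y.
by exists (b k ^+ N), a; split=> //; apply: primeX (proj1 hp) _ _ hk.
Qed.

Lemma contraction_wd (q : SpecD dB) :
  is_prime_diff_ideal dA (contr nu (proj1_sig q)) /\
  Vset (ker_pred nu) (contr nu (proj1_sig q)).
Proof. exact: contr_prime_diff hnu (proj2_sig q). Qed.

Definition contraction (q : SpecD dB) : Vker dA nu :=
  exist (fun p : SpecD dA => Vset (ker_pred nu) (proj1_sig p))
    (exist (is_prime_diff_ideal dA) (contr nu (proj1_sig q)) (proj1 (contraction_wd q)))
    (proj2 (contraction_wd q)).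

Definition extension_point (x : Vker dA nu) : SpecD dB :=
  let hp := proj2_sig (proj1_sig x) in
  exist (is_prime_diff_ideal dB) (extension nu (proj1_sig (proj1_sig x)))
    (extension_prime_diff hB hnu hp (proj2_sig x) (prime_cover hp)).

Lemma contractionK : cancel contraction extension_point.
Proof.
move=> q; apply: sig_eqP; apply: pred_ext => /=.
exact: extension_contr (proj2_sig q) (prime_cover (proj1 (contraction_wd q))).
Qed.

Lemma extension_pointK : cancel extension_point contraction.
Proof.
move=> x; do 2!apply: sig_eqP; apply: pred_ext => /=.
exact: contr_extension (proj2_sig (proj1_sig x)) (proj2_sig x).
Qed.

Lemma contraction_continuous (C : Vker dA nu -> Prop) :
  Vker_closed C -> kolchin_closed (fun q => C (contraction q)).
Proof.
move=> [C' [[E hE] hC]]; exists (fun y => exists2 e, E e & y = nu e) => q.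
by rewrite hC hE; apply: Vset_contr.
Qed.

Lemma extension_point_continuous (C : SpecD dB -> Prop) :
  kolchin_closed C -> Vker_closed (fun x => C (extension_point x)).
Proof.
move=> [E hE]; exists (fun p : SpecD dA => Vset (numerators nu E) (proj1_sig p)).
split; first by exists (numerators nu E).
move=> x; rewrite hE; have hp := proj2_sig (proj1_sig x).
exact: Vset_extension hp (proj2_sig x) (prime_cover hp) E.
Qed.

End Homeomorphism.

Theorem lemma2p2 (m : nat) (A B : comPzRingType)
  (dA : 'I_m -> A -> A) (dB : 'I_m -> B -> B)
  (hA : is_diff_ring dA) (hB : is_diff_ring dB)
  (nu : {rmorphism A -> B}) (hnu : is_diff_hom dA dB nu)
  (eta : B) (hgen : diff_generated dB nu eta)
  (n : nat) (b : 'I_n -> A)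
  (hb : forall k, exists a, nu (b k) * eta = nu a)
  (hbA : forall x : A, rad_diff_gen dA (fun a => exists k, a = b k) x) :
  exists wd : forall q : SpecD dB,
      is_prime_diff_ideal dA (contr nu (proj1_sig q)) /\
      Vset (ker_pred nu) (contr nu (proj1_sig q)),
    homeomorphism (@kolchin_closed B m dB) (@Vker_closed A B m dA nu)
      (fun q : SpecD dB =>
         exist (fun p : SpecD dA => Vset (ker_pred nu) (proj1_sig p))
           (exist (is_prime_diff_ideal dA) (contr nu (proj1_sig q)) (proj1 (wd q)))
           (proj2 (wd q))).
Proof.
exists (contraction_wd hnu).
change (homeomorphism (@kolchin_closed B m dB) (@Vker_closed A B m dA nu) (contraction hnu)).
apply: (homeomorphism_inverse (contractionK hB hnu hgen hb hbA)
  (extension_pointK hB hnu hgen hb hbA)).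
- exact: contraction_continuous.
- exact: extension_point_continuous.
Qed.
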